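(* Let $G$ be a graph of order $n$ with no isolated vertices. Then $\gamma_{\rm gr}^t(G)=n$ if and only if there is an integer $k$ with $n=2k$ such that the vertices of $G$ can be labeled $x_1,\ldots,x_k,y_1,\ldots,y_k$ so that: (i) $x_i$ is adjacent to $y_i$ for each $i\in\{1,\ldots,k\}$; (ii) $\{x_1,\ldots,x_k\}$ is an independent set; and (iii) whenever $y_j$ is adjacent to $x_i$, we have $i \ge j$.
   Context: All graphs are finite, simple, without isolated vertices. $N(v)$ denotes the open neighborhood of $v$. A sequence $S=(v_1,\ldots,v_k)$ of distinct vertices of $G$ is a legal (open neighborhood) sequence if $N(v_i)\setminus \bigcup_{j=1}^{i-1} N(v_j)\neq\emptyset$ for every $i\in\{2,\ldots,k\}$. It is a total dominating sequence if moreover the set $\{v_1,\ldots,v_k\}$ is a total dominating set of $G$ (every vertex has a neighbor in it). The Grundy total domination number $\gamma_{\rm gr}^t(G)$ is the maximum length of a total dominating sequence of $G$. *)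

From mathcomp Require Import all_boot.
Set Implicit Arguments. Unset Strict Implicit. Unset Printing Implicit Defensive.

Definition simple_graph (T : finType) (e : rel T) : Prop :=
  symmetric e /\ irreflexive e.

Definition no_isolated (T : finType) (e : rel T) : Prop :=
  forall v : T, exists u, e v u.

Definition nbhd (T : finType) (e : rel T) (v : T) : {set T} := [set u | e v u].

Definition legal_seq (T : finType) (e : rel T) (s : seq T) : Prop :=
  uniq s /\
  forall (p q : seq T) (v : T), s = p ++ v :: q -> p != [::] ->
    ~~ (nbhd e v \subset \bigcup_(w <- p) nbhd e w).

Definition total_dominating (T : finType) (e : rel T) (S : pred T) : Prop :=
  forall v : T, exists2 u, u \in S & e v u.

Definition total_dominating_seq (T : finType) (e : rel T) (s : seq T) : Prop :=
  legal_seq e s /\ total_dominating e (mem s).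

(* g is the Grundy total domination number: the maximum length of a total
   dominating sequence (such sequences exist when there are no isolated vertices). *)
Definition is_grundy_total (T : finType) (e : rel T) (g : nat) : Prop :=
  (exists s, total_dominating_seq e s /\ size s = g) /\
  (forall s, total_dominating_seq e s -> size s <= g).

From mathcomp Require Import all_boot zify.
Set Implicit Arguments. Unset Strict Implicit. Unset Printing Implicit Defensive.

(* A total dominating sequence of length n = |V| lists every vertex, so each
   vertex u has a neighbour h u occurring first in it.  Legality makes h onto:
   a vertex v is h u for any private neighbour u of v.  Hence h is a
   permutation, and as u is a neighbour of h u, pos (h (h u)) <= pos u; summing
   over all u forces equality, so h is a perfect matching.  Naming y the later
   and x the earlier vertex of each pair, with the y's in decreasing order of
   position, gives the labeling.  Conversely x_1, ..., x_k, y_k, ..., y_1 is a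
   legal sequence: y_i is a private neighbour of x_i and x_i one of y_i. *)

Lemma fin_surj_inj (T : finType) (f : T -> T) :
  (forall y, exists x, f x = y) -> injective f.
Proof.
move=> f_surj; apply/injectiveP/card_uniqP; rewrite size_map.
apply: eq_cardT => y; have [x <-] := f_surj y.
by rewrite map_f ?mem_enum.
Qed.

Lemma inj_leq_eq (T : finType) (g : T -> T) (f : T -> nat) :
  injective g -> (forall u, f (g u) <= f u) -> forall u, f (g u) = f u.
Proof.
move=> g_inj le_fg u; apply/eqP; rewrite eqn_leq le_fg /=.
have sum_eq : \sum_v f (g v) = \sum_v f v by rewrite [RHS](reindex_inj g_inj).
have : \sum_v (f v - f (g v)) == 0 by rewrite sumnB // sum_eq subnn.
by rewrite sum_nat_eq0 => /forallP/(_ u); rewrite subn_eq0.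
Qed.

Lemma card_involution_split (T : finType) (h : T -> T) (Y : {pred T}) :
  involutive h -> (forall u, (h u \in Y) = (u \notin Y)) -> #|T| = 2 * #|Y|.
Proof.
move=> hK hY; rewrite -(cardC Y) mul2n -addnn; congr (_ + _).
rewrite -(card_image (can_inj hK) Y); apply: eq_card => u; rewrite inE.
apply/idP/imageP => [uY | [v vY ->]]; last by rewrite -hY hK.
by exists (h u); rewrite ?hK // hY.
Qed.

Lemma exists_enum_decreasing (T : finType) (Y : {pred T}) (f : T -> nat) :
  injective f ->
  exists y : 'I_#|Y| -> T,
    [/\ injective y, forall i, y i \in Y, forall v, v \in Y -> exists i, v = y i
      & forall i j : 'I_#|Y|, i < j -> f (y j) < f (y i)].
Proof.
move=> f_inj; pose ge_f a b := f b <= f a.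
pose ys := sort ge_f (enum Y).
have size_ys : size ys = #|Y| by rewrite size_sort cardE.
have mem_ys v : (v \in ys) = (v \in Y) by rewrite mem_sort mem_enum.
have ys_uniq : uniq ys by rewrite sort_uniq enum_uniq.
have ys_sorted : sorted ge_f ys by apply: sort_sorted => a b; apply: leq_total.
have lt_size (i : 'I_#|Y|) : i < size ys by rewrite size_ys.
pose y (i : 'I_#|Y|) := nth (enum_val i) ys i.
have y_nth x0 i : y i = nth x0 ys i by apply: set_nth_default.
have y_inj : injective y.
  move=> i j; rewrite (y_nth (enum_val i) i) (y_nth (enum_val i) j) => /eqP.
  by rewrite nth_uniq // => /eqP/val_inj.
exists y; split=> // [i | v vY | i j lt_ij].
- by rewrite -mem_ys mem_nth.
- have lt_v : index v ys < #|Y| by rewrite -size_ys index_mem mem_ys.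
  by exists (Ordinal lt_v); rewrite (y_nth v) nth_index ?mem_ys.
have ge_trans : transitive ge_f.
  by move=> b a c le_ba le_cb; apply: leq_trans le_cb le_ba.
have := sorted_ltn_nth ge_trans (y i) ys_sorted i j (lt_size i) (lt_size j) lt_ij.
rewrite /ge_f -!y_nth leq_eqVlt => /predU1P [/f_inj/y_inj eq_ji | //].
by rewrite eq_ji ltnn in lt_ij.
Qed.

Lemma legal_seqP (T : finType) (e : rel T) (s : seq T) :
  legal_seq e s <->
  uniq s /\ forall v, v \in s -> 0 < index v s ->
    exists2 u, e v u & forall w, index w s < index v s -> ~~ e w u.
Proof.
split=> [[s_uniq legal] | [s_uniq private]]; split=> //.
  move=> v vs pos_v; set i := index v s.
  have s_split : s = take i s ++ v :: drop i.+1 s.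
    by rewrite -[in v :: _](nth_index v vs) -drop_nth ?index_mem // cat_take_drop.
  have p_nil : take i s != [::] by rewrite -size_eq0 size_take index_mem vs -lt0n.
  case/subsetPn: (legal _ _ _ s_split p_nil) => u; rewrite inE => evu u_out.
  exists u => // w lt_wv; apply: contra u_out => ewu.
  rewrite bigcup_seq; apply/bigcupP; exists w; last by rewrite inE.
  by rewrite in_take_leq ?index_size.
move=> p q v s_split p_nil.
have v_notin_p : v \notin p.
  by move: s_uniq; rewrite s_split cat_uniq /= => /and3P [_ /norP []].
have index_v : index v s = size p.
  by rewrite s_split index_cat (negbTE v_notin_p) /= eqxx addn0.
have vs : v \in s by rewrite s_split mem_cat mem_head orbT.
have [|u evu priv_u] := private v vs; first by rewrite index_v lt0n size_eq0.
apply/subsetPn; exists u; first by rewrite inE.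
rewrite bigcup_seq; apply/bigcupP => -[w wp]; rewrite inE; apply/negP/priv_u.
by rewrite index_v s_split index_cat wp index_mem.
Qed.

Section FirstNeighbour.

Variables (T : finType) (e : rel T) (s : seq T).
Hypotheses (e_sym : symmetric e) (e_noiso : no_isolated e).
Hypotheses (s_uniq : uniq s) (s_full : forall u, u \in s).

Definition first_nbr u := nth u s (find (e u) s).

Lemma has_nbr u : has (e u) s.
Proof. by have [b eub] := e_noiso u; apply/hasP; exists b. Qed.

Lemma first_nbr_adj u : e u (first_nbr u).
Proof. exact/nth_find/has_nbr. Qed.

Lemma first_nbr_min u b : e u b -> index (first_nbr u) s <= index b s.
Proof.
move=> eub; rewrite /first_nbr index_uniq -?has_find ?has_nbr // leqNgt.
by apply/negP => /(before_find b); rewrite nth_index ?eub.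
Qed.

Hypothesis s_legal : legal_seq e s.

Lemma first_nbr_surj v : exists u, first_nbr u = v.
Proof.
have [u evu priv_u] : exists2 u, e v u & forall w, index w s < index v s -> ~~ e w u.
  have [-> | pos_v] := posnP (index v s); first by have [u] := e_noiso v; exists u.
  by have [_] := (legal_seqP e s).1 s_legal; apply.
exists u; apply: index_inj => //; apply/eqP; rewrite eqn_leq first_nbr_min 1?e_sym //=.
by rewrite leqNgt; apply: contraL (first_nbr_adj u) => /priv_u; rewrite e_sym.
Qed.

Lemma first_nbrK : involutive first_nbr.
Proof.
have first_nbr_inj := fin_surj_inj first_nbr_surj.
have first_nbr2_min u : index (first_nbr (first_nbr u)) s <= index u s.
  by apply: first_nbr_min; rewrite e_sym first_nbr_adj.
move=> u; apply: index_inj => //.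
exact: (inj_leq_eq (inj_comp first_nbr_inj first_nbr_inj) first_nbr2_min).
Qed.

End FirstNeighbour.

Definition total_grundy_labeling (T : finType) (e : rel T) (k : nat)
    (x y : 'I_k -> T) : Prop :=
  #|T| = (2 * k)%N /\
  injective x /\ injective y /\
  (forall i j, x i != y j) /\
  (forall v : T, exists i, v = x i \/ v = y i) /\
  (forall i, e (x i) (y i)) /\
  (forall i j, ~~ e (x i) (x j)) /\
  (forall i j : 'I_k, e (y j) (x i) -> (j <= i)%N).

Section OrderedMatching.

Variables (T : finType) (e : rel T) (pos : T -> nat) (h : T -> T).
Hypotheses (e_sym : symmetric e) (e_irr : irreflexive e) (pos_inj : injective pos).
Hypotheses (hK : involutive h) (h_adj : forall u, e u (h u)).
Hypothesis h_min : forall u b, e u b -> pos (h u) <= pos b.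

Lemma labeling_of_ordered_matching :
  exists k (x y : 'I_k -> T), total_grundy_labeling e x y.
Proof.
pose Y := [pred u | pos (h u) < pos u].
have hY u : (h u \in Y) = (u \notin Y).
  have : pos (h u) != pos u by apply: contraTneq (h_adj u) => /pos_inj ->; rewrite e_irr.
  by rewrite !inE hK -leqNgt ltn_neqAle eq_sym => ->.
have [y [y_inj yY Y_y y_decr]] := exists_enum_decreasing Y pos_inj.
exists #|Y|, (h \o y), y; split; first exact: card_involution_split hK hY.
split; first exact: inj_comp (can_inj hK) y_inj.
do 2 split=> //.
  by move=> i j /=; apply/eqP => hyi; have := yY j; rewrite -hyi hY yY.
split.
  move=> v; case vY : (v \in Y); first by have [i ->] := Y_y v vY; exists i; right.
  have [|i hv] := Y_y (h v); first by rewrite hY vY.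
  by exists i; left; rewrite /= -hv hK.
split; first by move=> i; rewrite /= e_sym.
split.
  move=> i j /=; apply/negP => exx.
  have := h_min exx; rewrite e_sym in exx; have := h_min exx; rewrite !hK.
  by have := yY i; have := yY j; rewrite !inE; lia.
move=> i j /=; rewrite e_sym => /h_min; rewrite hK => le_ij.
by rewrite leqNgt; apply: contraL le_ij => /y_decr; rewrite -ltnNge.
Qed.

End OrderedMatching.

Lemma labeling_of_full_tds (T : finType) (e : rel T) (s : seq T) :
  simple_graph e -> no_isolated e -> total_dominating_seq e s -> size s = #|T| ->
  exists k (x y : 'I_k -> T), total_grundy_labeling e x y.
Proof.
move=> [e_sym e_irr] e_noiso [s_legal _] size_s; have [s_uniq _] := s_legal.
have s_T : s =i T.
  by apply/subset_cardP; [rewrite (card_uniqP s_uniq) | apply/subsetP].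
have s_full u : u \in s by rewrite s_T.
apply: (@labeling_of_ordered_matching _ _ (index^~ s) (first_nbr e s)) => //.
- by move=> u v; apply: index_inj (s_full u) (s_full v).
- exact: first_nbrK e_sym e_noiso s_uniq s_full s_legal.
- exact: first_nbr_adj e_noiso s_full.
- exact: first_nbr_min e_noiso s_uniq s_full.
Qed.

Lemma grundy_total_of_labeling (T : finType) (e : rel T) (k : nat) (x y : 'I_k -> T) :
  symmetric e -> no_isolated e -> total_grundy_labeling e x y ->
  is_grundy_total e #|T|.
Proof.
move=> e_sym e_noiso [card_T [x_inj [y_inj [x_neq_y [cover [e_xy [x_indep y_x]]]]]]].
pose s := map x (enum 'I_k) ++ map (y \o @rev_ord k) (enum 'I_k).
have index_x i : index (x i) s = i.
  by rewrite index_cat map_f ?mem_enum // (index_map x_inj) index_enum_ord.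
have index_y i : index (y i) s = k + (k - i.+1).
  have y_notin_x : y i \in map x (enum 'I_k) = false.
    by apply/mapP => -[j _ /esym/eqP]; rewrite (negbTE (x_neq_y j i)).
  rewrite index_cat y_notin_x size_map size_enum_ord.
  have -> : y i = (y \o @rev_ord k) (rev_ord i) by rewrite /= rev_ordK.
  by rewrite index_map ?index_enum_ord //; apply: inj_comp y_inj rev_ord_inj.
have s_full u : u \in s.
  have [i [-> | ->]] := cover u; rewrite mem_cat; first by rewrite map_f ?mem_enum.
  by apply/orP; right; apply/mapP; exists (rev_ord i); rewrite ?mem_enum //= rev_ordK.
have size_s : size s = #|T|.
  by rewrite size_cat !size_map -enumT size_enum_ord card_T; lia.
have s_uniq : uniq s.
  by apply/card_uniqP; rewrite size_s cardT; apply: eq_cardT.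
have s_legal : legal_seq e s.
  apply/legal_seqP; split=> // v _ _; have [i [-> | ->]] := cover v.
    exists (y i) => [|w]; first exact: e_xy.
    rewrite index_x.
    have [j [-> | ->]] := cover w; rewrite ?index_x ?index_y => lt_wi.
      by apply: contraL lt_wi; rewrite e_sym => /y_x; rewrite -leqNgt.
    by have := ltn_ord i; lia.
  exists (x i); first by rewrite e_sym.
  move=> w; rewrite index_y; have [j [-> | ->]] := cover w.
    by rewrite x_indep.
  rewrite index_y => lt_wi.
  by apply/negP => /y_x; have := ltn_ord i; have := ltn_ord j; lia.
split; last by move=> t [[t_uniq _] _]; rewrite -(card_uniqP t_uniq) max_card.
exists s; split=> //; split=> // v.
by have [u evu] := e_noiso v; exists u.
Qed.

Theorem mainTheorem5 (T : finType) (e : rel T) :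
  simple_graph e -> no_isolated e ->
  (is_grundy_total e #|T| <->
   exists (k : nat) (x y : 'I_k -> T),
     #|T| = (2 * k)%N /\
     injective x /\ injective y /\
     (forall i j, x i != y j) /\
     (forall v : T, exists i, v = x i \/ v = y i) /\
     (forall i, e (x i) (y i)) /\
     (forall i j, ~~ e (x i) (x j)) /\
     (forall i j : 'I_k, e (y j) (x i) -> (j <= i)%N)).
Proof.
move=> e_simple e_noiso; split=> [[[s [s_tds size_s]] _] | [k [x [y labeling]]]].
  exact: labeling_of_full_tds e_simple e_noiso s_tds size_s.
exact: grundy_total_of_labeling e_simple.1 e_noiso labeling.
Qed.
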